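(* In the isotropic setting below, let $F\in\mathrm{GL}^+(3)$ be fixed and $t\mapsto C_p(t)\in\mathrm{PSym}(3)$ be differentiable with $$\frac{d}{dt}[C_p]=\lambda(t)\,\frac{\mathrm{dev}_3\widetilde\Sigma}{\varphi}\,C_p,\qquad \lambda(t)\ge0,\quad \varphi:=\sqrt{\mathrm{tr}[(\mathrm{dev}_3\widetilde\Sigma)^2]}>0,$$ where $\widetilde\Sigma$ and $\varphi$ are evaluated at $(C,C_p(t))$. Then $\frac{d}{dt}[C_p]$ is symmetric, $\det C_p(t)$ is constant in $t$, and $$\frac{d}{dt}\widetilde W\big(CC_p^{-1}(t)\big)=-\frac{\lambda(t)}{2}\,\varphi=-\frac{\lambda(t)}{2}\,\big\|\mathrm{dev}_3\big(U_p^{-1}\widetilde\Sigma\,U_p\big)\big\|\le0,\qquad U_p=\sqrt{C_p(t)}.$$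
   Context: $W$ objective and isotropic, written $W(F_e)=\Psi(I_1(C_e),I_2(C_e),I_3(C_e))$ with $\Psi\in C^1$; $\widetilde W(X)=\Psi(\mathrm{tr}X,\mathrm{tr}(\mathrm{Cof}X),\det X)$. $C=F^TF$. $\langle X,Y\rangle=\mathrm{tr}(XY^T)$, $\|\cdot\|$ Frobenius norm, $D$ gradient, $\mathrm{dev}_3X=X-\frac13\mathrm{tr}(X)\mathbb{1}$. $\widetilde\Sigma:=2\,C\,D\widetilde W(CC_p^{-1})\,C_p^{-1}$. *)

From Stdlib Require Import Reals.
Open Scope R_scope.

(* 3x3 real matrices, represented as functions of indices; only indices
   0,1,2 are meaningful. *)
Definition Mat := nat -> nat -> R.
Definition Vec := nat -> R.

Definition meq (A B : Mat) : Prop :=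
  forall i j, (i < 3)%nat -> (j < 3)%nat -> A i j = B i j.

Definition sum3 (f : nat -> R) : R := f 0%nat + f 1%nat + f 2%nat.

Definition idm : Mat := fun i j => if Nat.eqb i j then 1 else 0.
Definition madd (A B : Mat) : Mat := fun i j => A i j + B i j.
Definition msub (A B : Mat) : Mat := fun i j => A i j - B i j.
Definition mscal (s : R) (A : Mat) : Mat := fun i j => s * A i j.
Definition mmul (A B : Mat) : Mat := fun i j => sum3 (fun k => A i k * B k j).
Definition trn (A : Mat) : Mat := fun i j => A j i.
Definition Emat (i j : nat) : Mat :=
  fun k l => if andb (Nat.eqb k i) (Nat.eqb l j) then 1 else 0.

Definition mtr (A : Mat) : R := sum3 (fun i => A i i).

Definition det (A : Mat) : R :=
  A 0%nat 0%nat * (A 1%nat 1%nat * A 2%nat 2%nat - A 1%nat 2%nat * A 2%nat 1%nat)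
  - A 0%nat 1%nat * (A 1%nat 0%nat * A 2%nat 2%nat - A 1%nat 2%nat * A 2%nat 0%nat)
  + A 0%nat 2%nat * (A 1%nat 0%nat * A 2%nat 1%nat - A 1%nat 1%nat * A 2%nat 0%nat).

(* cofactor matrix: Cof(A)_ij = (-1)^(i+j) * minor_ij, written cyclically *)
Definition cof (A : Mat) : Mat := fun i j =>
  let i1 := Nat.modulo (i + 1) 3 in let i2 := Nat.modulo (i + 2) 3 in
  let j1 := Nat.modulo (j + 1) 3 in let j2 := Nat.modulo (j + 2) 3 in
  A i1 j1 * A i2 j2 - A i1 j2 * A i2 j1.

Definition minv (A : Mat) : Mat := mscal (/ det A) (trn (cof A)).

Definition dev3 (A : Mat) : Mat := msub A (mscal (mtr A / 3) idm).

Definition frob (A B : Mat) : R := mtr (mmul A (trn B)).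
Definition mnorm (A : Mat) : R := sqrt (frob A A).

Definition symmetric (A : Mat) : Prop :=
  forall i j, (i < 3)%nat -> (j < 3)%nat -> A i j = A j i.

Definition posdef (A : Mat) : Prop :=
  forall x : Vec, (x 0%nat <> 0 \/ x 1%nat <> 0 \/ x 2%nat <> 0) ->
    0 < sum3 (fun i => sum3 (fun j => x i * A i j * x j)).

Definition PSym (A : Mat) : Prop := symmetric A /\ posdef A.

Definition pos3 (a b c : R) : Prop := 0 < a /\ 0 < b /\ 0 < c.

Definition cont3_at (f : R -> R -> R -> R) (a b c : R) : Prop :=
  forall eps, 0 < eps -> exists del, 0 < del /\
    forall x y z, Rabs (x - a) < del -> Rabs (y - b) < del -> Rabs (z - c) < del ->
      Rabs (f x y z - f a b c) < eps.

Definition C1_pos (Psi : R -> R -> R -> R) : Prop :=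
  exists d1 d2 d3 : R -> R -> R -> R,
    forall a b c, pos3 a b c ->
      derivable_pt_lim (fun x => Psi x b c) a (d1 a b c) /\
      derivable_pt_lim (fun y => Psi a y c) b (d2 a b c) /\
      derivable_pt_lim (fun z => Psi a b z) c (d3 a b c) /\
      cont3_at d1 a b c /\ cont3_at d2 a b c /\ cont3_at d3 a b c.

Definition Wt (Psi : R -> R -> R -> R) (X : Mat) : R :=
  Psi (mtr X) (mtr (cof X)) (det X).

Definition is_gradW (Psi : R -> R -> R -> R) (G : Mat -> Mat) : Prop :=
  forall X, pos3 (mtr X) (mtr (cof X)) (det X) ->
    forall i j, (i < 3)%nat -> (j < 3)%nat ->
      derivable_pt_lim (fun s => Wt Psi (madd X (mscal s (Emat i j)))) 0 (G X i j).

Definition SigmaT (G : Mat -> Mat) (C Cp : Mat) : Mat :=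
  mscal 2 (mmul (mmul C (G (mmul C (minv Cp)))) (minv Cp)).

Definition phiT (G : Mat -> Mat) (C Cp : Mat) : R :=
  let D := dev3 (SigmaT G C Cp) in sqrt (mtr (mmul D D)).

Definition mderiv_at (M : R -> Mat) (t : R) (dM : Mat) : Prop :=
  forall i j, (i < 3)%nat -> (j < 3)%nat ->
    derivable_pt_lim (fun u => M u i j) t (dM i j).

(* Along the flow dC_p = k dev(S) C_p, with S the stress Sigma~ and k = lambda/phi,
   isotropy makes S C_p = 2 C DW~(C C_p^{-1}) symmetric, hence so is dC_p, and
   d/dt det C_p = <Cof C_p, dC_p> = k det C_p tr(dev S) = 0.  The chain rule for
   the C^1 function Psi of the three invariants gives
   d/dt W~(C C_p^{-1}) = <DW~, -C C_p^{-1} dC_p C_p^{-1}> = -k tr(S dev S)/2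
   = -k phi^2/2.  Finally U_p^{-1} S U_p is symmetric and similar to S, so the
   Frobenius norm of its deviator is phi. *)

From Pilot Require Import Defs.
From Stdlib Require Import Reals Lra Lia Psatz Setoid Morphisms.
(* Setoid exports its own [symmetric]; re-importing Defs restores ours. *)
Import Defs.
Open Scope R_scope.

Lemma derivable_pt_lim_eq f t l l' :
  derivable_pt_lim f t l -> l = l' -> derivable_pt_lim f t l'.
Proof. intros H <-; exact H. Qed.

Lemma derivable_pt_lim_add f g t a b :
  derivable_pt_lim f t a -> derivable_pt_lim g t b ->
  derivable_pt_lim (fun u => f u + g u) t (a + b).
Proof. apply derivable_pt_lim_plus. Qed.

Lemma derivable_pt_lim_sub f g t a b :
  derivable_pt_lim f t a -> derivable_pt_lim g t b ->
  derivable_pt_lim (fun u => f u - g u) t (a - b).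
Proof. apply derivable_pt_lim_minus. Qed.

Lemma derivable_pt_lim_mul f g t a b :
  derivable_pt_lim f t a -> derivable_pt_lim g t b ->
  derivable_pt_lim (fun u => f u * g u) t (a * g t + f t * b).
Proof. apply derivable_pt_lim_mult. Qed.

Lemma derivable_pt_lim_Rinv f t a :
  derivable_pt_lim f t a -> f t <> 0 ->
  derivable_pt_lim (fun u => / f u) t (- a / (f t * f t)).
Proof.
  intros Hf Hft.
  apply (derivable_pt_lim_ext (fun u => 1 / f u)); [intro u; unfold Rdiv; ring|].
  eapply derivable_pt_lim_eq.
  - exact (derivable_pt_lim_div (fun _ => 1) f t 0 a (derivable_pt_lim_const 1 t) Hf Hft).
  - unfold Rsqr; field; exact Hft.
Qed.

Ltac derive_rational :=
  lazymatch goal with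
  | |- derivable_pt_lim (fun _ => ?c) _ _ => apply derivable_pt_lim_const
  | |- derivable_pt_lim (fun u => @?A u + @?B u) _ _ =>
      eapply (derivable_pt_lim_add A B); [derive_rational | derive_rational]
  | |- derivable_pt_lim (fun u => @?A u - @?B u) _ _ =>
      eapply (derivable_pt_lim_sub A B); [derive_rational | derive_rational]
  | |- derivable_pt_lim (fun u => @?A u * @?B u) _ _ =>
      eapply (derivable_pt_lim_mul A B); [derive_rational | derive_rational]
  | |- derivable_pt_lim (fun u => / @?A u) _ _ =>
      eapply (derivable_pt_lim_Rinv A); [derive_rational | ]
  | |- _ => idtac
  end.

Lemma derivative_zero_const f a b :
  (forall u, a < u < b -> derivable_pt_lim f u 0) ->
  forall t s, a < t < b -> a < s < b -> f t = f s.
Proof.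
  intros Hf.
  assert (Hlt : forall t s, a < t < b -> a < s < b -> t < s -> f t = f s).
  { intros t s Ht Hs Hts.
    destruct (MVT_cor2 f (fun _ => 0) t s Hts) as [c [Hc _]].
    - intros c Hc; apply Hf; lra.
    - lra. }
  intros t s Ht Hs.
  destruct (Rtotal_order t s) as [H|[->|H]]; [auto | reflexivity | symmetry; auto].
Qed.

(* [derivable_pt_lim f t l] unfolds to
   [forall eps, 0 < eps -> near0 (fun h => Rabs ((f (t + h) - f t) / h - l) < eps)]. *)
Definition near0 (P : R -> Prop) : Prop :=
  exists d : posreal, forall h, h <> 0 -> Rabs h < d -> P h.

Lemma near0_and P Q : near0 P -> near0 Q -> near0 (fun h => P h /\ Q h).
Proof.
  intros [d1 H1] [d2 H2].
  exists (mkposreal _ (Rmin_pos _ _ (cond_pos d1) (cond_pos d2))); simpl.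
  intros h Hh0 Hh.
  split; [apply H1 | apply H2]; auto;
    eapply Rlt_le_trans; eauto; [apply Rmin_l | apply Rmin_r].
Qed.

Lemma near0_increment g t v :
  derivable_pt_lim g t v -> forall eps, 0 < eps ->
  near0 (fun h => Rabs (g (t + h) - g t) < eps /\
                  Rabs ((g (t + h) - g t) / h - v) < eps).
Proof.
  intros Hg eps Heps.
  assert (Hv : 0 < Rabs v + eps) by (pose proof (Rabs_pos v); lra).
  destruct (Hg eps Heps) as [d Hd].
  exists (mkposreal _ (Rmin_pos _ _ (cond_pos d) (Rdiv_lt_0_compat _ _ Heps Hv))); simpl.
  intros h Hh0 Hh.
  pose proof (Rmin_l d (eps / (Rabs v + eps))) as Hm1.
  pose proof (Rmin_r d (eps / (Rabs v + eps))) as Hm2.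
  specialize (Hd h Hh0 ltac:(lra)). split; [|exact Hd].
  set (q := (g (t + h) - g t) / h) in Hd.
  assert (Hq : Rabs q < Rabs v + eps).
  { replace q with ((q - v) + v) by ring.
    pose proof (Rabs_triang (q - v) v); lra. }
  assert (Hh' : Rabs h * (Rabs v + eps) < eps).
  { assert (Hh2 : Rabs h < eps / (Rabs v + eps)) by lra.
    apply (Rmult_lt_compat_r (Rabs v + eps)) in Hh2; [|exact Hv].
    replace (eps / (Rabs v + eps) * (Rabs v + eps)) with eps in Hh2 by (field; lra).
    lra. }
  replace (g (t + h) - g t) with (q * h) by (unfold q; field; exact Hh0).
  rewrite Rabs_mult. pose proof (Rabs_pos h). pose proof (Rabs_pos q). nra.
Qed.

(* [cont3_at f a b c] unfolds to
   [forall eps, 0 < eps -> near3 a b c (fun x y z => Rabs (f x y z - f a b c) < eps)]. *)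
Definition near3 (a b c : R) (P : R -> R -> R -> Prop) : Prop :=
  exists del, 0 < del /\ forall x y z,
    Rabs (x - a) < del -> Rabs (y - b) < del -> Rabs (z - c) < del -> P x y z.

Lemma near3_and a b c P Q :
  near3 a b c P -> near3 a b c Q -> near3 a b c (fun x y z => P x y z /\ Q x y z).
Proof.
  intros [d1 [Hd1 H1]] [d2 [Hd2 H2]].
  exists (Rmin d1 d2); split; [apply Rmin_pos; auto|].
  pose proof (Rmin_l d1 d2); pose proof (Rmin_r d1 d2).
  intros x y z Hx Hy Hz; split; [apply H1 | apply H2]; lra.
Qed.

Lemma near3_pos3 a b c : pos3 a b c -> near3 a b c pos3.
Proof.
  intros [Ha [Hb Hc]].
  exists (Rmin a (Rmin b c)); split; [repeat apply Rmin_pos; auto|].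
  pose proof (Rmin_l a (Rmin b c)); pose proof (Rmin_r a (Rmin b c)).
  pose proof (Rmin_l b c); pose proof (Rmin_r b c).
  intros x y z Hx Hy Hz.
  apply Rabs_def2 in Hx; apply Rabs_def2 in Hy; apply Rabs_def2 in Hz.
  repeat split; lra.
Qed.

Lemma mvt_centered f f' x0 x1 :
  (forall s, Rabs (s - x0) <= Rabs (x1 - x0) -> derivable_pt_lim f s (f' s)) ->
  exists xi, Rabs (xi - x0) <= Rabs (x1 - x0) /\ f x1 - f x0 = f' xi * (x1 - x0).
Proof.
  intro Hf. destruct (Rtotal_order x0 x1) as [Hlt|[<-|Hgt]].
  - destruct (MVT_cor2 f f' x0 x1 Hlt) as [xi [E Hxi]].
    { intros s Hs; apply Hf. rewrite !Rabs_right; lra. }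
    exists xi; split; [rewrite !Rabs_right; lra | exact E].
  - exists x0; split; [lra | ring].
  - destruct (MVT_cor2 f f' x1 x0 Hgt) as [xi [E Hxi]].
    { intros s Hs; apply Hf. rewrite (Rabs_left1 (x1 - x0)) by lra.
      unfold Rabs; destruct (Rcase_abs (s - x0)); lra. }
    exists xi; split; [rewrite (Rabs_left (xi - x0)), (Rabs_left (x1 - x0)); lra | lra].
Qed.

Lemma Rabs_mult_sub_le p q p0 q0 e :
  Rabs (p - p0) < e -> Rabs (q - q0) < e -> e <= 1 ->
  Rabs (p * q - p0 * q0) <= e * (Rabs p0 + Rabs q0 + 1).
Proof.
  intros Hp Hq He.
  replace (p * q - p0 * q0) with ((p - p0) * (q - q0) + (p - p0) * q0 + p0 * (q - q0)) by ring.
  pose proof (Rabs_triang ((p - p0) * (q - q0) + (p - p0) * q0) (p0 * (q - q0))).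
  pose proof (Rabs_triang ((p - p0) * (q - q0)) ((p - p0) * q0)).
  rewrite !Rabs_mult in *.
  pose proof (Rabs_pos (p - p0)); pose proof (Rabs_pos (q - q0)).
  pose proof (Rabs_pos p0); pose proof (Rabs_pos q0).
  nra.
Qed.

Lemma Rabs_triang3 x y z : Rabs (x + y + z) <= Rabs x + Rabs y + Rabs z.
Proof. pose proof (Rabs_triang (x + y) z); pose proof (Rabs_triang x y); lra. Qed.

Lemma mvt_quotient_close f f' x0 x1 h L v e :
  h <> 0 -> e <= 1 ->
  (forall s, Rabs (s - x0) <= Rabs (x1 - x0) ->
     derivable_pt_lim f s (f' s) /\ Rabs (f' s - L) < e) ->
  Rabs ((x1 - x0) / h - v) < e ->
  Rabs ((f x1 - f x0) / h - L * v) <= e * (Rabs L + Rabs v + 1).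
Proof.
  intros Hh He Hf Hq.
  destruct (mvt_centered f f' x0 x1) as [xi [Hxi E]]; [intros s Hs; apply Hf, Hs|].
  replace ((f x1 - f x0) / h) with (f' xi * ((x1 - x0) / h)) by (rewrite E; field; exact Hh).
  apply Rabs_mult_sub_le; auto. apply Hf, Hxi.
Qed.

Lemma error_budget K eps : 0 <= K -> 0 < eps -> exists e, 0 < e /\ e <= 1 /\ e * K < eps.
Proof.
  intros HK Heps. exists (Rmin 1 (eps / (2 * (K + 1)))).
  pose proof (Rmin_l 1 (eps / (2 * (K + 1)))) as H1.
  pose proof (Rmin_r 1 (eps / (2 * (K + 1)))) as H2.
  assert (Hpos : 0 < Rmin 1 (eps / (2 * (K + 1)))) by (apply Rmin_pos; [lra | apply Rdiv_lt_0_compat; lra]).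
  repeat split; [exact Hpos | exact H1|].
  apply (Rmult_le_compat_r (K + 1)) in H2; [|lra].
  replace (eps / (2 * (K + 1)) * (K + 1)) with (eps / 2) in H2 by (field; lra).
  nra.
Qed.

Definition C1_partials (Psi d1 d2 d3 : R -> R -> R -> R) : Prop :=
  forall a b c, pos3 a b c ->
    derivable_pt_lim (fun x => Psi x b c) a (d1 a b c) /\
    derivable_pt_lim (fun y => Psi a y c) b (d2 a b c) /\
    derivable_pt_lim (fun z => Psi a b z) c (d3 a b c) /\
    cont3_at d1 a b c /\ cont3_at d2 a b c /\ cont3_at d3 a b c.

Lemma derivable_pt_lim_comp3 Psi d1 d2 d3 (g1 g2 g3 : R -> R) t v1 v2 v3 :
  C1_partials Psi d1 d2 d3 -> pos3 (g1 t) (g2 t) (g3 t) ->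
  derivable_pt_lim g1 t v1 -> derivable_pt_lim g2 t v2 -> derivable_pt_lim g3 t v3 ->
  derivable_pt_lim (fun u => Psi (g1 u) (g2 u) (g3 u)) t
    (d1 (g1 t) (g2 t) (g3 t) * v1 + d2 (g1 t) (g2 t) (g3 t) * v2
     + d3 (g1 t) (g2 t) (g3 t) * v3).
Proof.
  intros HC Hp H1 H2 H3 eps Heps.
  set (a := g1 t) in *; set (b := g2 t) in *; set (c := g3 t) in *.
  destruct (HC a b c Hp) as [_ [_ [_ [C1 [C2 C3]]]]].
  set (K := (Rabs (d1 a b c) + Rabs v1 + 1) + (Rabs (d2 a b c) + Rabs v2 + 1)
            + (Rabs (d3 a b c) + Rabs v3 + 1)).
  destruct (error_budget K eps) as [e [He [He1 HeK]]]; [|exact Heps|].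
  { unfold K; repeat apply Rplus_le_le_0_compat; try apply Rabs_pos; lra. }
  destruct (near3_and _ _ _ _ _ (near3_pos3 _ _ _ Hp)
             (near3_and _ _ _ _ _ (C1 e He) (near3_and _ _ _ _ _ (C2 e He) (C3 e He))))
    as [rho [Hrho Hbox]].
  assert (Hre : 0 < Rmin rho e) by (apply Rmin_pos; lra).
  destruct (near0_and _ _ (near0_increment _ _ _ H1 _ Hre)
             (near0_and _ _ (near0_increment _ _ _ H2 _ Hre) (near0_increment _ _ _ H3 _ Hre)))
    as [d Hd].
  exists d. intros h Hh0 Hh.
  pose proof (Rmin_l rho e); pose proof (Rmin_r rho e).
  destruct (Hd h Hh0 Hh) as [[X1 Q1] [[X2 Q2] [X3 Q3]]]. fold a b c in X1, X2, X3, Q1, Q2, Q3.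
  set (x := g1 (t + h)) in *; set (y := g2 (t + h)) in *; set (z := g3 (t + h)) in *.
  assert (T1 : Rabs ((Psi x y z - Psi a y z) / h - d1 a b c * v1)
               <= e * (Rabs (d1 a b c) + Rabs v1 + 1)).
  { apply (mvt_quotient_close (fun s => Psi s y z) (fun s => d1 s y z)); try lra.
    intros s Hs. destruct (Hbox s y z) as [Hps [E1 _]]; try lra.
    split; [apply (HC s y z Hps) | exact E1]. }
  assert (T2 : Rabs ((Psi a y z - Psi a b z) / h - d2 a b c * v2)
               <= e * (Rabs (d2 a b c) + Rabs v2 + 1)).
  { apply (mvt_quotient_close (fun s => Psi a s z) (fun s => d2 a s z)); try lra.
    intros s Hs. destruct (Hbox a s z) as [Hps [_ [E2 _]]];
      try (rewrite Rminus_diag, Rabs_R0); try lra.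
    split; [apply (HC a s z Hps) | exact E2]. }
  assert (T3 : Rabs ((Psi a b z - Psi a b c) / h - d3 a b c * v3)
               <= e * (Rabs (d3 a b c) + Rabs v3 + 1)).
  { apply (mvt_quotient_close (fun s => Psi a b s) (fun s => d3 a b s)); try lra.
    intros s Hs. destruct (Hbox a b s) as [Hps [_ [_ E3]]];
      try (rewrite Rminus_diag, Rabs_R0); try lra.
    split; [apply (HC a b s Hps) | exact E3]. }
  replace ((Psi x y z - Psi a b c) / h - (d1 a b c * v1 + d2 a b c * v2 + d3 a b c * v3))
    with (((Psi x y z - Psi a y z) / h - d1 a b c * v1)
          + ((Psi a y z - Psi a b z) / h - d2 a b c * v2)
          + ((Psi a b z - Psi a b c) / h - d3 a b c * v3)) by (field; exact Hh0).
  eapply Rle_lt_trans; [apply Rabs_triang3|].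
  unfold K in HeK. lra.
Qed.

Ltac idx3 i := destruct i as [|[|[|i]]]; [| | | exfalso; lia].
Ltac entrywise := intros i j Hi Hj; idx3 i; idx3 j.
Ltac unfold_mat :=
  cbv [minv mscal mmul trn frob mtr sum3 det cof madd msub idm dev3 Emat] in *; simpl in *.

(* A [Mat] is a function on all of nat x nat, so identities such as P P^{-1} = I
   only hold on the 3x3 block: we rewrite with the setoid [meq]. *)
#[global] Instance meq_Equivalence : Equivalence meq.
Proof.
  split.
  - intros A i j _ _; reflexivity.
  - intros A B H i j Hi Hj; symmetry; auto.
  - intros A B C H1 H2 i j Hi Hj; rewrite H1; auto.
Qed.

#[global] Instance madd_Proper : Proper (meq ==> meq ==> meq) madd.
Proof. intros A A' HA B B' HB i j Hi Hj; unfold madd; rewrite HA, HB; auto. Qed.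
#[global] Instance msub_Proper : Proper (meq ==> meq ==> meq) msub.
Proof. intros A A' HA B B' HB i j Hi Hj; unfold msub; rewrite HA, HB; auto. Qed.
#[global] Instance mscal_Proper : Proper (eq ==> meq ==> meq) mscal.
Proof. intros s s' <- A A' HA i j Hi Hj; unfold mscal; rewrite HA; auto. Qed.
#[global] Instance trn_Proper : Proper (meq ==> meq) trn.
Proof. intros A A' HA i j Hi Hj; unfold trn; rewrite HA; auto. Qed.
#[global] Instance mmul_Proper : Proper (meq ==> meq ==> meq) mmul.
Proof. intros A A' HA B B' HB i j Hi Hj; unfold mmul, sum3; rewrite !HA, !HB by lia; auto. Qed.
#[global] Instance mtr_Proper : Proper (meq ==> eq) mtr.
Proof. intros A A' HA; unfold mtr, sum3; rewrite !HA by lia; auto. Qed.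
#[global] Instance det_Proper : Proper (meq ==> eq) det.
Proof. intros A A' HA; unfold det; rewrite !HA by lia; auto. Qed.
#[global] Instance cof_Proper : Proper (meq ==> meq) cof.
Proof. intros A A' HA; entrywise; unfold cof; simpl; rewrite !HA by lia; auto. Qed.
#[global] Instance frob_Proper : Proper (meq ==> meq ==> eq) frob.
Proof. intros A A' HA B B' HB; unfold frob; rewrite HA, HB; reflexivity. Qed.
#[global] Instance symmetric_Proper : Proper (meq ==> iff) symmetric.
Proof.
  intros A A' HA; split; intros S i j Hi Hj.
  - rewrite <- !HA by lia; auto.
  - rewrite !HA by lia; auto.
Qed.

Lemma mmul_assoc A B C : meq (mmul (mmul A B) C) (mmul A (mmul B C)).
Proof. intros i j _ _; unfold mmul, sum3; ring. Qed.
Lemma mmul_idm_r A : meq (mmul A idm) A.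
Proof. entrywise; unfold mmul, idm, sum3; simpl; ring. Qed.
Lemma mmul_mscal_l s A B : meq (mmul (mscal s A) B) (mscal s (mmul A B)).
Proof. intros i j _ _; unfold mmul, mscal, sum3; ring. Qed.
Lemma mmul_mscal_r s A B : meq (mmul A (mscal s B)) (mscal s (mmul A B)).
Proof. intros i j _ _; unfold mmul, mscal, sum3; ring. Qed.
Lemma mmul_minv_r P : det P <> 0 -> meq (mmul P (minv P)) idm.
Proof. intro H; entrywise; unfold_mat; field; auto. Qed.
Lemma mmul_minv_l P : det P <> 0 -> meq (mmul (minv P) P) idm.
Proof. intro H; entrywise; unfold_mat; field; auto. Qed.

Lemma mtr_mscal s A : mtr (mscal s A) = s * mtr A.
Proof. unfold_mat; ring. Qed.
Lemma mtr_mmulC A B : mtr (mmul A B) = mtr (mmul B A).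
Proof. unfold_mat; ring. Qed.
Lemma mtr_dev3 S : mtr (dev3 S) = 0.
Proof. unfold_mat; field. Qed.
Lemma mtr_mmul_dev3 S : mtr (mmul S (dev3 S)) = mtr (mmul (dev3 S) (dev3 S)).
Proof. unfold_mat; field. Qed.
Lemma mtr_dev3_sq M : mtr (mmul (dev3 M) (dev3 M)) = mtr (mmul M M) - mtr M * mtr M / 3.
Proof. unfold_mat; field. Qed.
Lemma dev3_mmul_r S P : meq (mmul (dev3 S) P) (msub (mmul S P) (mscal (mtr S / 3) P)).
Proof. entrywise; unfold_mat; ring. Qed.

Lemma mtr_similar U S : det U <> 0 -> mtr (mmul (mmul (minv U) S) U) = mtr S.
Proof.
  intro HU. rewrite mtr_mmulC, <- mmul_assoc, mmul_minv_r by exact HU.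
  unfold_mat; ring.
Qed.

Lemma mtr_similar_sq U S : det U <> 0 ->
  mtr (mmul (mmul (mmul (minv U) S) U) (mmul (mmul (minv U) S) U)) = mtr (mmul S S).
Proof.
  intro HU.
  assert (E : meq (mmul (mmul (mmul (minv U) S) U) (mmul (mmul (minv U) S) U))
                  (mmul (mmul (minv U) (mmul S S)) U)).
  { rewrite !mmul_assoc, <- (mmul_assoc U (minv U)), mmul_minv_r by exact HU.
    rewrite <- (mmul_assoc idm), mmul_assoc. unfold_mat. intros i j _ _; ring. }
  rewrite E. apply mtr_similar, HU.
Qed.

Lemma frob_mscal_r A k B : frob A (mscal k B) = k * frob A B.
Proof. unfold_mat; ring. Qed.
Lemma frob_mmul_l A B M : frob A (mmul B M) = frob (mmul (trn B) A) M.
Proof. unfold_mat; ring. Qed.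
Lemma frob_Emat K i j : (i < 3)%nat -> (j < 3)%nat -> frob K (Emat i j) = K i j.
Proof. intros Hi Hj; idx3 i; idx3 j; unfold_mat; ring. Qed.
Lemma frob_cof_mmul_r M P : frob (cof P) (mmul M P) = det P * mtr M.
Proof. unfold_mat; ring. Qed.

Lemma symmetric_entries S : symmetric S ->
  S 1%nat 0%nat = S 0%nat 1%nat /\ S 2%nat 0%nat = S 0%nat 2%nat /\
  S 2%nat 1%nat = S 1%nat 2%nat.
Proof. intro H; repeat split; apply H; lia. Qed.

Lemma frob_symmetric_l S M : symmetric S -> frob S M = mtr (mmul S M).
Proof.
  intro H; destruct (symmetric_entries S H) as [e1 [e2 e3]].
  unfold_mat; rewrite e1, e2, e3; ring.
Qed.

Lemma trn_symmetric S : symmetric S -> meq (trn S) S.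
Proof. intros H i j Hi Hj; unfold trn; symmetry; auto. Qed.

Lemma symmetric_gram F : symmetric (mmul (trn F) F).
Proof. intros i j _ _; unfold_mat; ring. Qed.
Lemma symmetric_mscal c Y : symmetric Y -> symmetric (mscal c Y).
Proof. intros H i j Hi Hj; unfold mscal; rewrite H by auto; reflexivity. Qed.
Lemma symmetric_msub A B : symmetric A -> symmetric B -> symmetric (msub A B).
Proof. intros HA HB i j Hi Hj; unfold msub; rewrite HA, HB by auto; reflexivity. Qed.
Lemma symmetric_dev3 M : symmetric M -> symmetric (dev3 M).
Proof. intros H i j Hi Hj; unfold dev3, msub, mscal; rewrite H by auto; idx3 i; idx3 j; reflexivity. Qed.
Lemma symmetric_minv P : symmetric P -> symmetric (minv P).
Proof.
  intro H; destruct (symmetric_entries P H) as [e1 [e2 e3]].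
  entrywise; unfold_mat; rewrite ?e1, ?e2, ?e3; ring.
Qed.
Lemma symmetric_congr A B : symmetric A -> symmetric B -> symmetric (mmul (mmul A B) A).
Proof.
  intros HA HB; destruct (symmetric_entries A HA) as [a1 [a2 a3]];
    destruct (symmetric_entries B HB) as [b1 [b2 b3]].
  entrywise; unfold_mat; rewrite ?a1, ?a2, ?a3, ?b1, ?b2, ?b3; ring.
Qed.

Definition quad (A : Mat) (x : Vec) : R := sum3 (fun i => sum3 (fun j => x i * A i j * x j)).
Definition vec3 (a b c : R) : Vec := fun n => match n with 0%nat => a | 1%nat => b | _ => c end.

Lemma vec_zero_dec (x : Vec) :
  (x 0%nat <> 0 \/ x 1%nat <> 0 \/ x 2%nat <> 0) \/
  (x 0%nat = 0 /\ x 1%nat = 0 /\ x 2%nat = 0).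
Proof.
  destruct (Req_dec (x 0%nat) 0), (Req_dec (x 1%nat) 0), (Req_dec (x 2%nat) 0); tauto.
Qed.

Lemma quad_nonneg A x : posdef A -> 0 <= quad A x.
Proof.
  intro H; destruct (vec_zero_dec x) as [N|[E0 [E1 E2]]].
  - left; apply H, N.
  - right; unfold quad, sum3; rewrite E0, E1, E2; ring.
Qed.

(* Test vectors e_1, (P01, -P00, 0) and the last row of Cof P give, with m the
   leading 2x2 minor, P00 > 0, P00 * m > 0 and det P * m > 0. *)
Lemma PSym_det_pos P : PSym P -> 0 < det P.
Proof.
  intros [S H].
  assert (H0 : 0 < P 0%nat 0%nat).
  { assert (K : 0 < quad P (vec3 1 0 0)) by (apply H; simpl; lra).
    unfold quad, sum3, vec3 in K; simpl in K; lra. }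
  set (m := P 0%nat 0%nat * P 1%nat 1%nat - P 0%nat 1%nat * P 1%nat 0%nat).
  assert (Hm : 0 < m).
  { assert (K : 0 < quad P (vec3 (P 0%nat 1%nat) (- P 0%nat 0%nat) 0)) by (apply H; simpl; lra).
    replace (quad P (vec3 (P 0%nat 1%nat) (- P 0%nat 0%nat) 0)) with (P 0%nat 0%nat * m) in K.
    - nra.
    - unfold m, quad, sum3, vec3; simpl; rewrite (S 1%nat 0%nat) by lia; ring. }
  assert (K : 0 < quad P (vec3 (cof P 2%nat 0%nat) (cof P 2%nat 1%nat) (cof P 2%nat 2%nat))).
  { apply H. right; right. simpl. unfold cof; simpl. fold m. lra. }
  replace (quad P (vec3 (cof P 2%nat 0%nat) (cof P 2%nat 1%nat) (cof P 2%nat 2%nat)))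
    with (det P * m) in K by (unfold m; unfold_mat; unfold quad, sum3, vec3; simpl; ring).
  nra.
Qed.

(* x^T P^{-1} x = y^T P y with y = P^{-1} x. *)
Lemma posdef_minv P : PSym P -> posdef (minv P).
Proof.
  intros HP. pose proof (PSym_det_pos P HP) as Hd. destruct HP as [_ H].
  intros x Hx.
  set (y := fun i => sum3 (fun j => minv P i j * x j)).
  assert (Ey : quad (minv P) x = quad P y).
  { unfold y, quad. unfold_mat. field. lra. }
  assert (Ex : forall i, (i < 3)%nat -> x i = sum3 (fun j => P i j * y j)).
  { intros i Hi; idx3 i; unfold y; unfold_mat; field; lra. }
  change (0 < quad (minv P) x). rewrite Ey. apply H.
  destruct (vec_zero_dec y) as [N|[E0 [E1 E2]]]; [exact N|].
  exfalso. rewrite (Ex 0%nat), (Ex 1%nat), (Ex 2%nat) in Hx by lia.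
  unfold sum3 in Hx; rewrite E0, E1, E2 in Hx; lra.
Qed.

(* tr(F^T F Q) is the sum of the quadratic forms of Q at the rows of F. *)
Lemma mtr_gram_posdef F Q : det F <> 0 -> posdef Q -> 0 < mtr (mmul (mmul (trn F) F) Q).
Proof.
  intros HF HQ.
  replace (mtr (mmul (mmul (trn F) F) Q)) with
    (quad Q (F 0%nat) + quad Q (F 1%nat) + quad Q (F 2%nat)) by (unfold_mat; unfold quad, sum3; ring).
  pose proof (quad_nonneg Q (F 0%nat) HQ).
  pose proof (quad_nonneg Q (F 1%nat) HQ).
  pose proof (quad_nonneg Q (F 2%nat) HQ).
  destruct (vec_zero_dec (F 0%nat)) as [N0|Z0].
  { assert (0 < quad Q (F 0%nat)) by (apply HQ, N0). lra. }
  destruct (vec_zero_dec (F 1%nat)) as [N1|Z1].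
  { assert (0 < quad Q (F 1%nat)) by (apply HQ, N1). lra. }
  destruct (vec_zero_dec (F 2%nat)) as [N2|Z2].
  { assert (0 < quad Q (F 2%nat)) by (apply HQ, N2). lra. }
  exfalso. apply HF. unfold det. destruct Z0 as [-> [-> ->]]. ring.
Qed.

Lemma det_mmul A B : det (mmul A B) = det A * det B.
Proof. unfold_mat; ring. Qed.
Lemma det_trn A : det (trn A) = det A.
Proof. unfold_mat; ring. Qed.
Lemma det_minv P : det P <> 0 -> det (minv P) = / det P.
Proof. intro H; unfold_mat; field; auto. Qed.
Lemma det_cof A : det (cof A) = det A * det A.
Proof. unfold_mat; ring. Qed.
Lemma cof_mmul A B : meq (cof (mmul A B)) (mmul (cof A) (cof B)).
Proof. entrywise; unfold_mat; ring. Qed.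
Lemma cof_trn A : meq (cof (trn A)) (trn (cof A)).
Proof. entrywise; unfold_mat; ring. Qed.
Lemma cof_minv P : det P <> 0 -> meq (cof (minv P)) (mscal (/ det P) (trn P)).
Proof. intro H; entrywise; unfold_mat; field; auto. Qed.

(* Cof(C P^{-1}) = Cof(F)^T Cof(F) P / det P for C = F^T F. *)
Lemma invariants_pos F P : 0 < det F -> PSym P ->
  pos3 (mtr (mmul (mmul (trn F) F) (minv P)))
       (mtr (cof (mmul (mmul (trn F) F) (minv P))))
       (det (mmul (mmul (trn F) F) (minv P))).
Proof.
  intros HF HP. pose proof (PSym_det_pos P HP) as Hd.
  split; [|split].
  - apply mtr_gram_posdef; [lra | apply posdef_minv, HP].
  - rewrite cof_mmul, cof_mmul, cof_trn, cof_minv by lra.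
    rewrite (trn_symmetric P) by apply HP.
    rewrite mmul_mscal_r, mtr_mscal.
    apply Rmult_lt_0_compat; [apply Rinv_0_lt_compat, Hd|].
    apply mtr_gram_posdef; [rewrite det_cof; nra | apply HP].
  - rewrite !det_mmul, det_trn, det_minv by lra.
    apply Rmult_lt_0_compat; [nra | apply Rinv_0_lt_compat, Hd].
Qed.

Lemma derivable_mtr (M : R -> Mat) dM t : mderiv_at M t dM ->
  derivable_pt_lim (fun u => mtr (M u)) t (frob idm dM).
Proof.
  intro H; unfold mtr, sum3; eapply derivable_pt_lim_eq;
    [derive_rational; apply H; lia | unfold_mat; ring].
Qed.

Lemma derivable_mtr_cof (M : R -> Mat) dM t : mderiv_at M t dM ->
  derivable_pt_lim (fun u => mtr (cof (M u))) t
    (frob (msub (mscal (mtr (M t)) idm) (trn (M t))) dM).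
Proof.
  intro H; unfold mtr, cof, sum3; simpl; eapply derivable_pt_lim_eq;
    [derive_rational; apply H; lia | unfold_mat; ring].
Qed.

Lemma derivable_det (M : R -> Mat) dM t : mderiv_at M t dM ->
  derivable_pt_lim (fun u => det (M u)) t (frob (cof (M t)) dM).
Proof.
  intro H; unfold det; eapply derivable_pt_lim_eq;
    [derive_rational; apply H; lia | unfold_mat; ring].
Qed.

Lemma mderiv_mmul_l (M : R -> Mat) dM A t : mderiv_at M t dM ->
  mderiv_at (fun u => mmul A (M u)) t (mmul A dM).
Proof.
  intros H i j Hi Hj; unfold mmul, sum3; eapply derivable_pt_lim_eq;
    [derive_rational; apply H; lia | ring].
Qed.

Lemma mderiv_line X E t : mderiv_at (fun s => madd X (mscal s E)) t E.
Proof.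
  intros i j _ _; unfold madd, mscal; eapply derivable_pt_lim_eq.
  - apply derivable_pt_lim_add; [apply derivable_pt_lim_const|].
    apply derivable_pt_lim_mul; [apply derivable_pt_lim_id | apply derivable_pt_lim_const].
  - unfold id; ring.
Qed.

Lemma mderiv_minv (M : R -> Mat) dM t : mderiv_at M t dM -> det (M t) <> 0 ->
  mderiv_at (fun u => minv (M u)) t (mscal (-1) (mmul (mmul (minv (M t)) dM) (minv (M t)))).
Proof.
  intros H Hd. pose proof (derivable_det M dM t H) as Hdet.
  entrywise; unfold minv at 1, mscal at 1, trn at 1;
    (eapply derivable_pt_lim_eq;
     [eapply derivable_pt_lim_mul;
       [eapply derivable_pt_lim_Rinv; [exact Hdet | exact Hd]
       | unfold cof; simpl; derive_rational; apply H; lia] |]);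
    clear Hdet; unfold_mat; field; exact Hd.
Qed.

Definition gradWt (d1 d2 d3 : R -> R -> R -> R) (X : Mat) : Mat :=
  let a := mtr X in let b := mtr (cof X) in let c := det X in
  madd (madd (mscal (d1 a b c) idm) (mscal (d2 a b c) (msub (mscal a idm) (trn X))))
       (mscal (d3 a b c) (cof X)).

#[global] Instance gradWt_Proper d1 d2 d3 : Proper (meq ==> meq) (gradWt d1 d2 d3).
Proof. intros X X' HX; unfold gradWt; rewrite HX; reflexivity. Qed.

Section Gradient.

Variables (Psi d1 d2 d3 : R -> R -> R -> R) (G : Mat -> Mat).
Hypothesis HC : C1_partials Psi d1 d2 d3.

Lemma derivable_Wt_gradWt (M : R -> Mat) dM t :
  pos3 (mtr (M t)) (mtr (cof (M t))) (det (M t)) -> mderiv_at M t dM ->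
  derivable_pt_lim (fun u => Wt Psi (M u)) t (frob (gradWt d1 d2 d3 (M t)) dM).
Proof.
  intros Hp HM. eapply derivable_pt_lim_eq.
  - exact (derivable_pt_lim_comp3 Psi d1 d2 d3 _ _ _ t _ _ _ HC Hp
             (derivable_mtr M dM t HM) (derivable_mtr_cof M dM t HM) (derivable_det M dM t HM)).
  - unfold gradWt; unfold_mat; ring.
Qed.

Hypothesis HG : is_gradW Psi G.

Lemma is_gradW_gradWt X : pos3 (mtr X) (mtr (cof X)) (det X) -> meq (G X) (gradWt d1 d2 d3 X).
Proof.
  intros Hp i j Hi Hj.
  set (M := fun s => madd X (mscal s (Emat i j))).
  assert (E0 : meq (M 0) X) by (intros k l _ _; unfold M, madd, mscal; ring).
  assert (Hp0 : pos3 (mtr (M 0)) (mtr (cof (M 0))) (det (M 0))) by (rewrite E0; exact Hp).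
  pose proof (derivable_Wt_gradWt M _ 0 Hp0 (mderiv_line X (Emat i j) 0)) as Hd.
  rewrite (uniqueness_limite _ _ _ _ (HG X Hp i j Hi Hj) Hd), E0.
  apply frob_Emat; auto.
Qed.

Lemma derivable_Wt (M : R -> Mat) dM t :
  pos3 (mtr (M t)) (mtr (cof (M t))) (det (M t)) -> mderiv_at M t dM ->
  derivable_pt_lim (fun u => Wt Psi (M u)) t (frob (G (M t)) dM).
Proof.
  intros Hp HM. rewrite (is_gradW_gradWt (M t) Hp).
  apply derivable_Wt_gradWt; auto.
Qed.

Lemma symmetric_mmul_gradWt C Q : symmetric C -> symmetric Q ->
  symmetric (mmul C (gradWt d1 d2 d3 (mmul C Q))).
Proof.
  intros SC SQ.
  destruct (symmetric_entries C SC) as [c1 [c2 c3]].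
  destruct (symmetric_entries Q SQ) as [q1 [q2 q3]].
  unfold gradWt.
  set (e1 := d1 _ _ _); set (e2 := d2 _ _ _); set (e3 := d3 _ _ _); clearbody e1 e2 e3.
  entrywise; unfold_mat; rewrite ?c1, ?c2, ?c3, ?q1, ?q2, ?q3; ring.
Qed.

Lemma symmetric_mmul_grad C Q : symmetric C -> symmetric Q ->
  pos3 (mtr (mmul C Q)) (mtr (cof (mmul C Q))) (det (mmul C Q)) ->
  symmetric (mmul C (G (mmul C Q))).
Proof.
  intros SC SQ Hp. rewrite (is_gradW_gradWt _ Hp).
  apply symmetric_mmul_gradWt; auto.
Qed.

End Gradient.

Lemma phiT_sqr G C P : 0 < phiT G C P ->
  phiT G C P * phiT G C P = mtr (mmul (dev3 (SigmaT G C P)) (dev3 (SigmaT G C P))).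
Proof.
  unfold phiT; intro H.
  destruct (Rle_dec 0 (mtr (mmul (dev3 (SigmaT G C P)) (dev3 (SigmaT G C P))))) as [h|h].
  - apply sqrt_sqrt, h.
  - rewrite sqrt_neg_0 in H; lra.
Qed.

Lemma frob_cof_flow k S P : frob (cof P) (mscal k (mmul (dev3 S) P)) = 0.
Proof. rewrite frob_mscal_r, frob_cof_mmul_r, mtr_dev3; ring. Qed.

Section Flow.

Variables (Psi d1 d2 d3 : R -> R -> R -> R) (G : Mat -> Mat) (F P : Mat).
Hypotheses (HC : C1_partials Psi d1 d2 d3) (HG : is_gradW Psi G).
Hypotheses (HF : 0 < det F) (HP : PSym P).

Local Notation C := (mmul (trn F) F).
Local Notation Sigma := (SigmaT G C P).

Lemma SigmaT_mmul_r : meq (mmul Sigma P) (mscal 2 (mmul C (G (mmul C (minv P))))).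
Proof.
  pose proof (PSym_det_pos P HP).
  unfold SigmaT. rewrite mmul_mscal_l, mmul_assoc, mmul_minv_l, mmul_idm_r by lra.
  reflexivity.
Qed.

Lemma symmetric_gram_grad : symmetric (mmul C (G (mmul C (minv P)))).
Proof.
  apply (symmetric_mmul_grad Psi d1 d2 d3); auto.
  - apply symmetric_gram.
  - apply symmetric_minv, HP.
  - apply invariants_pos; auto.
Qed.

Lemma symmetric_SigmaT_mmul_r : symmetric (mmul Sigma P).
Proof. rewrite SigmaT_mmul_r; apply symmetric_mscal, symmetric_gram_grad. Qed.

Lemma symmetric_dev3_SigmaT_mmul_r : symmetric (mmul (dev3 Sigma) P).
Proof.
  rewrite dev3_mmul_r.
  apply symmetric_msub; [apply symmetric_SigmaT_mmul_r | apply symmetric_mscal, HP].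
Qed.

(* dW/dt = <D W(X), C d(P^{-1})> = -k tr(C DW(X) P^{-1} dev Sigma) = -k tr(Sigma dev Sigma) / 2. *)
Lemma derivable_Wt_flow (Cp : R -> Mat) dP t k :
  Cp t = P -> mderiv_at Cp t dP -> meq dP (mscal k (mmul (dev3 Sigma) P)) ->
  derivable_pt_lim (fun u => Wt Psi (mmul C (minv (Cp u)))) t
    (- k * mtr (mmul (dev3 Sigma) (dev3 Sigma)) / 2).
Proof.
  intros Ht HdP Hflow. pose proof (PSym_det_pos P HP) as Hd.
  set (Q := minv P). set (X := mmul C Q).
  eapply derivable_pt_lim_eq.
  - apply (derivable_Wt Psi d1 d2 d3 G HC HG (fun u => mmul C (minv (Cp u)))).
    + rewrite Ht; apply invariants_pos; auto.
    + apply mderiv_mmul_l, mderiv_minv; [exact HdP | rewrite Ht; lra].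
  - rewrite Ht, Hflow. fold Q X.
    assert (E : meq (mmul C (mscal (-1) (mmul (mmul Q (mscal k (mmul (dev3 Sigma) P))) Q)))
                    (mscal (- k) (mmul C (mmul Q (dev3 Sigma))))).
    { transitivity (mscal (- k) (mmul (mmul X (dev3 Sigma)) (mmul P Q))).
      - intros i j _ _; unfold X, mmul, mscal, sum3; ring.
      - unfold X, Q; rewrite mmul_minv_r, mmul_idm_r, (mmul_assoc C) by lra; reflexivity. }
    assert (HS : mtr (mmul Sigma (dev3 Sigma))
                 = 2 * mtr (mmul (mmul (mmul C (G X)) Q) (dev3 Sigma))).
    { unfold SigmaT at 1; rewrite mmul_mscal_l, mtr_mscal; reflexivity. }
    rewrite E, frob_mscal_r, frob_mmul_l, (trn_symmetric C) by apply symmetric_gram.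
    rewrite frob_symmetric_l by apply symmetric_gram_grad.
    rewrite <- mmul_assoc, <- mtr_mmul_dev3, HS; field.
Qed.

Lemma phiT_similar U : PSym U -> meq (mmul U U) P ->
  phiT G C P = mnorm (dev3 (mmul (mmul (minv U) Sigma) U)).
Proof.
  intros HU HUU. pose proof (PSym_det_pos U HU) as Hd.
  assert (EU : meq U (mmul P (minv U))).
  { rewrite <- HUU, mmul_assoc, mmul_minv_r, mmul_idm_r by lra; reflexivity. }
  assert (SM : symmetric (mmul (mmul (minv U) Sigma) U)).
  { rewrite EU at 2. rewrite <- mmul_assoc, (mmul_assoc (minv U)).
    apply symmetric_congr; [apply symmetric_minv, HU | apply symmetric_SigmaT_mmul_r]. }
  unfold mnorm, phiT. rewrite frob_symmetric_l by apply symmetric_dev3, SM.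
  rewrite !mtr_dev3_sq, mtr_similar_sq, mtr_similar by lra.
  reflexivity.
Qed.

End Flow.

Theorem mainTheorem13
  (Psi : R -> R -> R -> R) (G : Mat -> Mat)
  (F : Mat) (a b : R) (Cp dCp : R -> Mat) (lam : R -> R) :
  C1_pos Psi ->
  is_gradW Psi G ->
  0 < det F ->
  a < b ->
  (forall t, a < t < b -> PSym (Cp t)) ->
  (forall t, a < t < b -> mderiv_at Cp t (dCp t)) ->
  (forall t, a < t < b -> 0 <= lam t) ->
  (forall t, a < t < b -> 0 < phiT G (mmul (trn F) F) (Cp t)) ->
  (forall t, a < t < b ->
     meq (dCp t)
         (mscal (lam t / phiT G (mmul (trn F) F) (Cp t))
                (mmul (dev3 (SigmaT G (mmul (trn F) F) (Cp t))) (Cp t)))) ->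
  (forall t, a < t < b -> symmetric (dCp t)) /\
  (forall t s, a < t < b -> a < s < b -> det (Cp t) = det (Cp s)) /\
  (forall t, a < t < b ->
     derivable_pt_lim (fun u => Wt Psi (mmul (mmul (trn F) F) (minv (Cp u)))) t
       (- (lam t / 2) * phiT G (mmul (trn F) F) (Cp t)) /\
     (forall U, PSym U -> meq (mmul U U) (Cp t) ->
        phiT G (mmul (trn F) F) (Cp t) =
        mnorm (dev3 (mmul (mmul (minv U) (SigmaT G (mmul (trn F) F) (Cp t))) U))) /\
     - (lam t / 2) * phiT G (mmul (trn F) F) (Cp t) <= 0).
Proof.
  intros [d1 [d2 [d3 HC]]] HG HF _ HP HdCp Hlam Hphi Hflow.
  split; [|split].
  - intros t Ht. rewrite (Hflow t Ht).
    apply symmetric_mscal, (symmetric_dev3_SigmaT_mmul_r Psi d1 d2 d3); auto.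
  - apply derivative_zero_const. intros u Hu.
    eapply derivable_pt_lim_eq; [apply derivable_det, HdCp, Hu|].
    rewrite (Hflow u Hu). apply frob_cof_flow.
  - intros t Ht. pose proof (Hphi t Ht). pose proof (Hlam t Ht).
    split; [|split].
    + eapply derivable_pt_lim_eq.
      * apply (derivable_Wt_flow Psi d1 d2 d3 G F (Cp t) HC HG HF (HP t Ht) Cp (dCp t)); auto.
      * rewrite <- phiT_sqr by auto. field. lra.
    + intros U HU HUU. apply (phiT_similar Psi d1 d2 d3); auto.
    + nra.
Qed.
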